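(* Let $m\ge1$ and $0<h<2^m$. Then the sets $\mathbb{V}_k(h)$, $k\in\mathbb{Z}^m$, are pairwise disjoint; $\mathbb{V}(h)=\bigcup_{k\in\mathbb{Z}^m}\mathbb{V}_k(h)$; $\mathbb{V}_0(h)$ is compact; $\mathbb{V}_0(h)$ is strictly convex; and $\mathbb{V}_0(h)$ has nonempty interior in $\mathbb{R}^m$. Moreover, $\mathbb{V}_0(h)=\mathbb{V}(h)\cap(0,2\pi)^m$.
   Context: $s(t)=2\sin(t/2)$. For $h\ge0$, $\mathbb{V}(h)=\{x\in\mathbb{R}^m:|\prod_{j=1}^m s(x_j)|\ge h\}$, $\mathbb{V}_0(h)=\mathbb{V}(h)\cap[0,2\pi]^m$, and for $k\in\mathbb{Z}^m$, $\mathbb{V}_k(h)=\mathbb{V}_0(h)+2\pi k=\{x+2\pi k:x\in\mathbb{V}_0(h)\}$. A set is strictly convex if for any two distinct points of it, their midpoint (indeed every point of the open segment between them) is an interior point of the set. *)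

From Stdlib Require Import Reals ZArith.
From mathcomp Require Import all_boot.
Set Implicit Arguments.
Unset Strict Implicit.

Local Open Scope R_scope.

Definition pt (m : nat) := 'I_m -> R.

Definition s (t : R) : R := 2 * sin (t / 2).

Definition prod_s (m : nat) (x : pt m) : R :=
  \big[Rmult/1]_(j < m) s (x j).

Definition V (m : nat) (h : R) (x : pt m) : Prop := Rabs (prod_s x) >= h.

Definition V0 (m : nat) (h : R) (x : pt m) : Prop :=
  V h x /\ forall j, 0 <= x j <= 2 * PI.

Definition Vk (m : nat) (h : R) (k : 'I_m -> Z) (x : pt m) : Prop :=
  exists y : pt m, V0 h y /\ forall j, x j = y j + 2 * PI * IZR (k j).

Definition ball_Rm (m : nat) (z : pt m) (eps : R) (w : pt m) : Prop :=
  forall j, Rabs (w j - z j) < eps.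

Definition open_Rm (m : nat) (U : pt m -> Prop) : Prop :=
  forall z, U z -> exists eps, 0 < eps /\ forall w, ball_Rm z eps w -> U w.

Definition interior_pt (m : nat) (S : pt m -> Prop) (z : pt m) : Prop :=
  exists eps, 0 < eps /\ forall w, ball_Rm z eps w -> S w.

Definition compact_Rm (m : nat) (K : pt m -> Prop) : Prop :=
  forall (I : Type) (U : I -> pt m -> Prop),
    (forall i, open_Rm (U i)) ->
    (forall x, K x -> exists i, U i x) ->
    exists l : list I, forall x, K x -> exists i, List.In i l /\ U i x.

Definition strictly_convex (m : nat) (S : pt m -> Prop) : Prop :=
  forall x y : pt m, S x -> S y -> x <> y ->
    forall t, 0 < t < 1 -> interior_pt S (fun j => (1 - t) * x j + t * y j).

(* Since |s| is 2pi-periodic and vanishes on 2piZ, V(h) is tiled by the translates V_k(h) of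
   V_0(h), and V_0(h) stays away from the faces of the cube [0, 2pi]^m.  The product
   P(x) = prod_j s(x_j) is Lipschitz, so V_0(h) is closed, hence compact by Heine-Borel for
   the cube (proved with the tube lemma), and every point of the cube with |P| > h is interior.
   On (0, 2pi) the function s is positive and strictly concave, so for z = (1 - t) x + t y
   weighted AM-GM gives P(z) > P(x)^(1-t) P(y)^t >= h: z is interior. *)

From Stdlib Require Import Reals ZArith Lra Lia Classical FunctionalExtensionality ClassicalEpsilon.
From mathcomp Require Import all_boot.
From HB Require Import structures.
Set Implicit Arguments.
Unset Strict Implicit.
Local Open Scope R_scope.

HB.instance Definition _ := Monoid.isComLaw.Build R 1 Rmult
  (fun x y z => esym (Rmult_assoc x y z)) Rmult_comm Rmult_1_l.

Lemma Rabs_mul_sub_le A B x y a b dA dx :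
  Rabs A <= a -> Rabs (A - B) <= dA -> Rabs (x - y) <= dx -> Rabs y <= b ->
  Rabs (A * x - B * y) <= a * dx + dA * b.
Proof.
move=> hA hAB hxy hy.
have -> : A * x - B * y = A * (x - y) + (A - B) * y by ring.
apply: Rle_trans (Rabs_triang _ _) _; rewrite !Rabs_mult.
apply: Rplus_le_compat; apply: Rmult_le_compat => //; exact: Rabs_pos.
Qed.

Lemma big_prod_Rabs_le_pow n (F : 'I_n -> R) c :
  (forall j, Rabs (F j) <= c) -> Rabs (\big[Rmult/1]_(j < n) F j) <= c ^ n.
Proof.
elim: n F => [|n IH] F hF; first by rewrite big_ord0 Rabs_R1 /=; lra.
rewrite big_ord_recr /= Rabs_mult Rmult_comm.
apply: Rmult_le_compat; [exact: Rabs_pos | exact: Rabs_pos | exact: hF | exact: IH].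
Qed.

Lemma big_prod_lipschitz n (F G : 'I_n -> R) c d :
  (forall j, Rabs (F j) <= c) -> (forall j, Rabs (G j) <= c) ->
  (forall j, Rabs (F j - G j) <= d) ->
  Rabs (\big[Rmult/1]_(j < n) F j - \big[Rmult/1]_(j < n) G j) <= INR n * c ^ n.-1 * d.
Proof.
elim: n F G => [|n IH] F G hF hG hFG.
  by rewrite !big_ord0 Rminus_diag Rabs_R0 /=; lra.
rewrite !big_ord_recr S_INR /=.
have hpow : INR n * c ^ n.-1 * d * c = INR n * c ^ n * d by case: (n) => [|k] /=; ring.
have -> : (INR n + 1) * c ^ n * d = c ^ n * d + INR n * c ^ n.-1 * d * c.
  by rewrite hpow; ring.
apply: Rabs_mul_sub_le (hFG ord_max) (hG ord_max).
- exact: big_prod_Rabs_le_pow.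
- exact: IH.
Qed.

Lemma Rabs_big_prod n (F : 'I_n -> R) :
  Rabs (\big[Rmult/1]_(j < n) F j) = \big[Rmult/1]_(j < n) Rabs (F j).
Proof. apply: (big_morph Rabs); [exact: Rabs_mult | exact: Rabs_R1]. Qed.

Lemma big_prod_pos n (F : 'I_n -> R) :
  (forall j, 0 < F j) -> 0 < \big[Rmult/1]_(j < n) F j.
Proof. move=> hF; apply: big_ind => //; [lra | exact: Rmult_lt_0_compat]. Qed.

Lemma big_prod_lt n (F G : 'I_n -> R) j0 :
  (forall j, 0 < F j <= G j) -> F j0 < G j0 ->
  \big[Rmult/1]_(j < n) F j < \big[Rmult/1]_(j < n) G j.
Proof.
move=> hFG hj0; rewrite (bigD1 j0) //= [X in _ < X](bigD1 j0) //=.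
set P := \big[Rmult/1]_(j < n | j != j0) F j; set Q := \big[Rmult/1]_(j < n | j != j0) G j.
have [hP hPQ] : 0 < P /\ P <= Q.
  apply: (big_ind2 (fun A B => 0 < A /\ A <= B)) => [|A1 A2 B1 B2 [h1 h2] [h3 h4]|j _].
  - lra.
  - split; [nra | apply: Rmult_le_compat; lra].
  - exact: hFG.
have := hFG j0; nra.
Qed.

Lemma Rpower_big_prod n (F : 'I_n -> R) u :
  (forall j, 0 < F j) ->
  \big[Rmult/1]_(j < n) Rpower (F j) u = Rpower (\big[Rmult/1]_(j < n) F j) u.
Proof.
move=> hF.
suff [] : 0 < \big[Rmult/1]_(j < n) F j /\
  \big[Rmult/1]_(j < n) Rpower (F j) u = Rpower (\big[Rmult/1]_(j < n) F j) u by [].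
apply: (big_ind2 (fun B A => 0 < B /\ A = Rpower B u)) => [|B1 A1 B2 A2 [h1 ->] [h2 ->]|j _].
- by split; [lra | rewrite /Rpower ln_1 Rmult_0_r exp_0].
- by split; [exact: Rmult_lt_0_compat | exact: Rpower_mult_distr].
- by split.
Qed.

Lemma s_bound t : Rabs (s t) <= 2.
Proof.
rewrite /s Rabs_mult Rabs_right; last lra.
have : Rabs (sin (t / 2)) <= 1 by apply: Rabs_le; exact: SIN_bound.
lra.
Qed.

Lemma sin_lipschitz a b : Rabs (sin a - sin b) <= Rabs (a - b).
Proof.
have [c [-> _]] := MVT_abs sin cos b a (fun c _ => derivable_pt_lim_sin c).
rewrite -[X in _ <= X]Rmult_1_l.
apply: Rmult_le_compat_r; [exact: Rabs_pos | apply: Rabs_le; exact: COS_bound].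
Qed.

Lemma s_lipschitz a b : Rabs (s a - s b) <= Rabs (a - b).
Proof.
have := sin_lipschitz (a / 2) (b / 2).
have -> : a / 2 - b / 2 = (a - b) * / 2 by field.
rewrite /s -Rmult_minus_distr_l !Rabs_mult (Rabs_right 2) ?(Rabs_right (/ 2)); lra.
Qed.

Lemma s_0 : s 0 = 0.
Proof. by rewrite /s /Rdiv Rmult_0_l sin_0 Rmult_0_r. Qed.

Lemma s_2PI : s (2 * PI) = 0.
Proof. rewrite /s; have -> : 2 * PI / 2 = PI by field. by rewrite sin_PI Rmult_0_r. Qed.

Lemma Rabs_s_le_endpoint_dist a :
  0 <= a <= 2 * PI -> Rabs (s a) <= a /\ Rabs (s a) <= 2 * PI - a.
Proof.
move=> ha; have := s_lipschitz a 0; have := s_lipschitz a (2 * PI).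
rewrite s_0 s_2PI !Rminus_0_r Rabs_minus_sym (Rabs_right a) ?(Rabs_right (2 * PI - a)); lra.
Qed.

Lemma s_pos a : 0 < a < 2 * PI -> 0 < s a.
Proof. move=> ha; apply: Rmult_lt_0_compat; [lra | apply: sin_gt_0; lra]. Qed.

Lemma Rabs_sin_add_IZR_PI a k : Rabs (sin (a + IZR k * PI)) = Rabs (sin a).
Proof.
have hsin : sin (IZR k * PI) = 0 by apply: sin_eq_0_1; exists k.
have hcos : Rabs (cos (IZR k * PI)) = 1.
  have := sin2_cos2 (IZR k * PI); rewrite hsin /Rsqr => h.
  by case: (Rle_dec 0 (cos (IZR k * PI))) => hc;
    [rewrite Rabs_right | rewrite Rabs_left]; nra.
by rewrite sin_plus hsin Rmult_0_r Rplus_0_r Rabs_mult hcos Rmult_1_r.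
Qed.

Lemma Rabs_s_add_2PI_IZR a k : Rabs (s (a + 2 * PI * IZR k)) = Rabs (s a).
Proof.
rewrite /s !Rabs_mult.
have -> : (a + 2 * PI * IZR k) / 2 = a / 2 + IZR k * PI by field.
by rewrite Rabs_sin_add_IZR_PI.
Qed.

Lemma sin_lt_tangent a c :
  0 <= a <= PI -> 0 <= c <= PI -> a <> c -> sin a < sin c + cos c * (a - c).
Proof.
move=> ha hc hac; case: (Rtotal_order a c) => [lt_ac | [// | lt_ca]].
- have [x [hx hxi]] := MVT_cor2 sin cos a c lt_ac (fun x _ => derivable_pt_lim_sin x).
  have : cos c < cos x by apply: cos_decreasing_1; lra.
  nra.
- have [x [hx hxi]] := MVT_cor2 sin cos c a lt_ca (fun x _ => derivable_pt_lim_sin x).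
  have : cos x < cos c by apply: cos_decreasing_1; lra.
  nra.
Qed.

Lemma s_strict_concave a b t :
  0 <= a <= 2 * PI -> 0 <= b <= 2 * PI -> a <> b -> 0 < t < 1 ->
  (1 - t) * s a + t * s b < s ((1 - t) * a + t * b).
Proof.
move=> ha hb hab ht; rewrite /s.
set c := ((1 - t) * a + t * b) / 2.
have hc : 0 <= c <= PI by rewrite /c; split; nra.
have hac : a / 2 <> c by rewrite /c => e; apply: hab; nra.
have hbc : b / 2 <> c by rewrite /c => e; apply: hab; nra.
have := @sin_lt_tangent (a / 2) c ltac:(lra) hc hac.
have := @sin_lt_tangent (b / 2) c ltac:(lra) hc hbc.
have : (1 - t) * (cos c * (a / 2 - c)) + t * (cos c * (b / 2 - c)) = 0.
  by rewrite /c; field.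
nra.
Qed.

Lemma prod_s_lipschitz m (x w : pt m) d :
  (forall j, Rabs (w j - x j) <= d) ->
  Rabs (prod_s w - prod_s x) <= INR m * 2 ^ m.-1 * d.
Proof.
move=> hwx; apply: big_prod_lipschitz => j; [exact: s_bound | exact: s_bound |].
exact: Rle_trans (s_lipschitz _ _) (hwx j).
Qed.

Lemma Rabs_prod_s_le_coord m (x : pt m) j : Rabs (prod_s x) <= 2 ^ m * Rabs (s (x j)).
Proof.
rewrite /prod_s (bigD1 j) //= big_mkcond /= Rabs_mult Rmult_comm.
apply: Rmult_le_compat_r; first exact: Rabs_pos.
apply: big_prod_Rabs_le_pow => i; case: ifP => _; first exact: s_bound.
rewrite Rabs_R1; lra.
Qed.

Lemma Rabs_prod_s_shift m (x y : pt m) (k : 'I_m -> Z) :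
  (forall j, x j = y j + 2 * PI * IZR (k j)) -> Rabs (prod_s x) = Rabs (prod_s y).
Proof.
move=> exy; rewrite /prod_s !Rabs_big_prod; apply: eq_bigr => j _.
by rewrite exy Rabs_s_add_2PI_IZR.
Qed.

Lemma prod_s_PI m : prod_s (fun _ : 'I_m => PI) = 2 ^ m.
Proof.
rewrite /prod_s big_const_ord.
have -> : s PI = 2 by rewrite /s sin_PI2; ring.
by elim: m => //= n ->.
Qed.

Lemma V0_in_open_cube m h (x : pt m) j : 0 < h -> V0 h x -> 0 < x j < 2 * PI.
Proof.
move=> hh [hV hcube]; rewrite /V in hV.
have hsj : 0 < Rabs (s (x j)).
  have := Rabs_prod_s_le_coord x j; have := pow_lt 2 m; have := Rabs_pos (s (x j)); nra.
have := Rabs_s_le_endpoint_dist (hcube j); lra.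
Qed.

Lemma V0_interior m h (z : pt m) :
  0 <= h -> (forall j, 0 <= z j <= 2 * PI) -> h < Rabs (prod_s z) ->
  interior_pt (V0 h) z.
Proof.
move=> hh hz hPz.
set C := INR m * 2 ^ m.-1.
have hC : 0 <= C by apply: Rmult_le_pos; [exact: pos_INR | apply: pow_le; lra].
have h2m : 0 < 2 ^ m by apply: pow_lt; lra.
set e := (Rabs (prod_s z) - h) / (C + 2 ^ m).
have he : 0 < e by apply: Rdiv_lt_0_compat; lra.
have hCe : C * e + 2 ^ m * e = Rabs (prod_s z) - h by rewrite /e; field; lra.
exists e; split=> // w hw; split.
- have := prod_s_lipschitz (fun j => Rlt_le _ _ (hw j)).
  have := Rabs_triang_inv (prod_s z) (prod_s w).
  rewrite /V Rabs_minus_sym -/C; nra.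
- move=> j; have := Rabs_def2 _ _ (hw j); have := Rabs_s_le_endpoint_dist (hz j).
  have := Rabs_prod_s_le_coord z j; nra.
Qed.

Lemma V0_complement_open m h : open_Rm (fun x : pt m => ~ V0 h x).
Proof.
move=> x hx.
case: (classic (forall j, 0 <= x j <= 2 * PI)) => [hcube | /not_all_ex_not [j hj]].
- have hPx : Rabs (prod_s x) < h.
    by apply: Rnot_le_lt => hP; apply: hx; split=> //; rewrite /V; lra.
  set C := INR m * 2 ^ m.-1.
  have hC : 0 <= C by apply: Rmult_le_pos; [exact: pos_INR | apply: pow_le; lra].
  set e := (h - Rabs (prod_s x)) / (C + 1).
  have he : 0 < e by apply: Rdiv_lt_0_compat; lra.
  have hCe : C * e + e = h - Rabs (prod_s x) by rewrite /e; field; lra.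
  exists e; split=> // w hw [hV _]; rewrite /V in hV.
  have := prod_s_lipschitz (fun j => Rlt_le _ _ (hw j)).
  have := Rabs_triang_inv (prod_s w) (prod_s x).
  rewrite -/C; nra.
- case: (Rlt_dec (x j) 0) => hxj.
  + exists (- x j); split=> [|w hw [_ hcube]]; first lra.
    have := Rabs_def2 _ _ (hw j); have := hcube j; lra.
  + exists (x j - 2 * PI); split=> [|w hw [_ hcube]]; first lra.
    have := Rabs_def2 _ _ (hw j); have := hcube j; lra.
Qed.

(* [exp u >= 1 + u] at the log-deviations [u], [v] of [p], [q] from their weighted geometric mean,
   whose weighted sum vanishes. *)
Lemma Rpower_weighted_amgm p q t :
  0 < p -> 0 < q -> 0 <= t <= 1 -> Rpower p (1 - t) * Rpower q t <= (1 - t) * p + t * q.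
Proof.
move=> hp hq ht; rewrite /Rpower -exp_plus.
set g := (1 - t) * ln p + t * ln q.
set u := t * (ln p - ln q); set v := (1 - t) * (ln q - ln p).
have ep : p = exp g * exp u.
  by rewrite -exp_plus -{1}(exp_ln _ hp) /g /u; congr exp; ring.
have eq : q = exp g * exp v.
  by rewrite -exp_plus -{1}(exp_ln _ hq) /g /v; congr exp; ring.
have huv : (1 - t) * u + t * v = 0 by rewrite /u /v; ring.
have hu := exp_ineq1_le u; have hv := exp_ineq1_le v; have hg := exp_pos g.
have hconv : 1 <= (1 - t) * exp u + t * exp v by nra.
rewrite ep eq; nra.
Qed.

Lemma Rpower_mean_ge h p q t :
  0 < h -> h <= p -> h <= q -> 0 <= t <= 1 -> h <= Rpower p (1 - t) * Rpower q t.
Proof.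
move=> hh hp hq ht.
rewrite -{1}(Rpower_1 _ hh) -{1}(Rplus_minus t 1) Rplus_comm Rpower_plus.
by apply: Rmult_le_compat; try apply: Rle_Rpower_l; try lra; exact: Rlt_le (exp_pos _).
Qed.

Lemma s_geometric_mean_le a b t :
  0 < a < 2 * PI -> 0 < b < 2 * PI -> 0 < t < 1 ->
  let g := Rpower (s a) (1 - t) * Rpower (s b) t in
  0 < g <= s ((1 - t) * a + t * b) /\ (a <> b -> g < s ((1 - t) * a + t * b)).
Proof.
move=> ha hb ht g.
have hg : 0 < g by apply: Rmult_lt_0_compat; exact: exp_pos.
have := Rpower_weighted_amgm (s_pos ha) (s_pos hb) (t:=t) ltac:(lra); rewrite -/g.
case: (Req_dec a b) => [-> | neab] hamgm.
- have -> : (1 - t) * b + t * b = b by ring.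
  split=> [|//]; lra.
- have := s_strict_concave (a:=a) (b:=b) ltac:(lra) ltac:(lra) neab ht.
  split=> [|_]; lra.
Qed.

Lemma V0_strictly_convex m h : 0 < h -> strictly_convex (V0 (m:=m) h).
Proof.
move=> hh x y hx hy hxy t ht.
have [j0 hj0] : exists j0, x j0 <> y j0.
  apply: NNPP => hne; apply: hxy; apply: functional_extensionality => j.
  by apply: NNPP => e; apply: hne; exists j.
have cx j := V0_in_open_cube j hh hx; have cy j := V0_in_open_cube j hh hy.
set z := fun j => (1 - t) * x j + t * y j.
have cz j : 0 < z j < 2 * PI by have := cx j; have := cy j; rewrite /z; split; nra.
pose G j := Rpower (s (x j)) (1 - t) * Rpower (s (y j)) t.
have hG j := s_geometric_mean_le (cx j) (cy j) ht.
have Px : 0 < prod_s x := big_prod_pos (fun j => s_pos (cx j)).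
have Py : 0 < prod_s y := big_prod_pos (fun j => s_pos (cy j)).
have Pz : 0 < prod_s z := big_prod_pos (fun j => s_pos (cz j)).
have hPx : h <= prod_s x by have := proj1 hx; rewrite /V Rabs_right; lra.
have hPy : h <= prod_s y by have := proj1 hy; rewrite /V Rabs_right; lra.
have hGz : \big[Rmult/1]_(j < m) G j < prod_s z.
  by apply: (big_prod_lt (j0:=j0)) => [j|]; [exact: (proj1 (hG j)) | exact: (proj2 (hG j0) hj0)].
have hGh : h <= \big[Rmult/1]_(j < m) G j.
  rewrite /G big_split /= !Rpower_big_prod => [|j|j]; try exact: s_pos.
  by apply: Rpower_mean_ge hh hPx hPy _; lra.
apply: V0_interior => [|j|]; first lra.
- by have := cz j; lra.
- by rewrite Rabs_right; lra.
Qed.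

Lemma list_min_pos (T : list R) (d : R -> R) :
  (forall t, List.In t T -> 0 < d t) ->
  exists e, 0 < e /\ forall t, List.In t T -> e <= d t.
Proof.
elim: T => [|a T IH] hd; first by exists 1; split=> [|t []]; lra.
have [e [he heT]] := IH (fun t hT => hd t (or_intror hT)).
exists (Rmin e (d a)); split=> [|t [<- | hT]].
- by apply: Rmin_pos => //; apply: hd; left.
- exact: Rmin_r.
- exact: Rle_trans (Rmin_l _ _) (heT t hT).
Qed.

Lemma segment_finite_subcover L (d : R -> R) :
  (forall t, 0 <= t <= L -> 0 < d t) ->
  exists T : list R, (forall t, List.In t T -> 0 <= t <= L) /\
    forall u, 0 <= u <= L -> exists t, List.In t T /\ Rabs (u - t) < d t.
Proof.
move=> hd.
have cond t : (exists u, 0 <= t <= L /\ Rabs (u - t) < d t) -> 0 <= t <= L.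
  by case=> u [].
pose fam := Rtopology.mkfamily (fun t => 0 <= t <= L)
  (fun t u => 0 <= t <= L /\ Rabs (u - t) < d t) cond.
have hopen : covering_open_set (fun t => 0 <= t <= L) fam.
  split=> [u hu | t u [ht hu]].
  - by exists u; split=> //=; rewrite Rminus_diag Rabs_R0; exact: hd.
  - have hr : 0 < d t - Rabs (u - t) by lra.
    exists (mkposreal _ hr) => v; rewrite /disc /= => hv; split=> //.
    have := Rabs_triang (v - u) (u - t); have -> : v - u + (u - t) = v - t by ring.
    lra.
have [D [hcov [T hT]]] := compact_P3 0 L fam hopen.
exists T; split=> [t /hT [[ht _] _] // | u hu].
have [t [[ht htu] hDt]] := hcov u hu.
by exists t; split=> //; apply/hT.
Qed.

Section CubeCompact.

Variables (m : nat) (L : R) (I : Type) (U : I -> pt m -> Prop).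
Hypothesis U_open : forall i, open_Rm (U i).
Hypothesis U_cover : forall x : pt m, (forall j, 0 <= x j <= L) -> exists i, U i x.

Definition tube_finitely_covered (n : nat) : Prop :=
  forall c : pt m, (forall j : 'I_m, (n <= j)%N -> 0 <= c j <= L) ->
  exists (l : list I) (e : R), 0 < e /\ forall x : pt m,
    (forall j : 'I_m, (j < n)%N -> 0 <= x j <= L) ->
    (forall j : 'I_m, (n <= j)%N -> Rabs (x j - c j) < e) ->
    exists i, List.In i l /\ U i x.

Lemma tube_finitely_covered0 : tube_finitely_covered 0.
Proof.
move=> c hc; have [i hi] := U_cover (fun j => hc j (leq0n j)).
have [e [he hball]] := U_open hi.
exists (i :: nil), e; split=> // x _ hx; exists i; split; first by left.
by apply: hball => j; exact: hx.
Qed.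

Lemma tube_finitely_coveredS n :
  (n < m)%N -> tube_finitely_covered n -> tube_finitely_covered n.+1.
Proof.
move=> ltnm IH c hc.
pose ct t (j : 'I_m) := if nat_of_ord j == n then t else c j.
have hct t : 0 <= t <= L -> forall j : 'I_m, (n <= j)%N -> 0 <= ct t j <= L.
  move=> ht j hj; rewrite /ct; case: eqP => // hjn.
  by apply: hc; rewrite ltn_neqAle hj andbT eq_sym; apply/eqP.
have hF t : exists p : list I * R, 0 <= t <= L -> 0 < p.2 /\ forall x : pt m,
    (forall j : 'I_m, (j < n)%N -> 0 <= x j <= L) ->
    (forall j : 'I_m, (n <= j)%N -> Rabs (x j - ct t j) < p.2) ->
    exists i, List.In i p.1 /\ U i x.
  case: (classic (0 <= t <= L)) => ht; last by exists (nil, 1).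
  by have [l [e he]] := IH (ct t) (hct t ht); exists (l, e).
pose F t := proj1_sig (constructive_indefinite_description _ (hF t)).
have FP t : 0 <= t <= L -> _ := proj2_sig (constructive_indefinite_description _ (hF t)).
have [T [hTL hTcov]] := segment_finite_subcover (d := fun t => (F t).2)
  (fun t ht => proj1 (FP t ht)).
have [e [he heT]] := list_min_pos (T := T) (d := fun t => (F t).2)
  (fun t hT => proj1 (FP t (hTL t hT))).
exists (List.flat_map (fun t => (F t).1) T), e; split=> // x hx1 hx2.
pose jn := Ordinal ltnm.
have [t [hT ht]] := hTcov (x jn) (hx1 jn (ltnSn n)).
have hxt (j : 'I_m) : (n <= j)%N -> Rabs (x j - ct t j) < (F t).2.
  move=> hj; rewrite /ct; case: eqP => hjn.
  - by have -> : j = jn by apply: ord_inj.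
  - apply: Rlt_le_trans (hx2 j _) (heT t hT).
    by rewrite ltn_neqAle hj andbT eq_sym; apply/eqP.
have [i [hi hUi]] := proj2 (FP t (hTL t hT)) x (fun j hj => hx1 j (ltnW hj)) hxt.
by exists i; split=> //; apply/List.in_flat_map; exists t.
Qed.

Lemma cube_finite_subcover :
  exists l : list I, forall x : pt m, (forall j, 0 <= x j <= L) ->
    exists i, List.In i l /\ U i x.
Proof.
have tube n : (n <= m)%N -> tube_finitely_covered n.
  elim: n => [|n IHn] hn; first exact: tube_finitely_covered0.
  exact: tube_finitely_coveredS hn (IHn (ltnW hn)).
have no_coord_ge_m (j : 'I_m) : (m <= j)%N -> False by rewrite leqNgt ltn_ord.
have [l [e [_ hl]]] := tube m (leqnn m) (fun _ => 0)
  (fun j hj => False_ind _ (no_coord_ge_m j hj)).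
by exists l => x hx; apply: hl => [j _ | j /no_coord_ge_m []]; exact: hx.
Qed.

End CubeCompact.

Lemma V0_compact m h : compact_Rm (V0 (m:=m) h).
Proof.
move=> I U U_open U_cover.
pose U' (o : option I) := if o is Some i then U i else fun x => ~ V0 h x.
have U'_open o : open_Rm (U' o).
  by case: o => [i|]; [exact: U_open | exact: V0_complement_open].
have U'_cover (x : pt m) : (forall j, 0 <= x j <= 2 * PI) -> exists o, U' o x.
  move=> _; case: (classic (V0 h x)) => hx; last by exists None.
  by have [i hi] := U_cover x hx; exists (Some i).
have [l hl] := cube_finite_subcover U'_open U'_cover.
exists (List.flat_map (fun o => if o is Some i then i :: nil else nil) l) => x hx.
have [[i|] [hi hUi]] := hl x (proj2 hx); last by [].
by exists i; split=> //; apply/List.in_flat_map; exists (Some i); split=> //; left.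
Qed.

Lemma V0_iff_open_cube m h (x : pt m) :
  0 < h -> V0 h x <-> V h x /\ forall j, 0 < x j < 2 * PI.
Proof.
move=> hh; split=> [hx | [hV hx]].
- by split=> [|j]; [exact: proj1 hx | exact: V0_in_open_cube j hh hx].
- by split=> // j; have := hx j; lra.
Qed.

Lemma Vk_disjoint m h (k k' : 'I_m -> Z) (x : pt m) :
  0 < h -> Vk h k x -> Vk h k' x -> k = k'.
Proof.
move=> hh [y [hy ey]] [y' [hy' ey']]; apply: functional_extensionality => j.
have hd : -1 < IZR (k j - k' j) < 1.
  have := V0_in_open_cube j hh hy; have := V0_in_open_cube j hh hy'.
  have := ey j; have := ey' j; have := PI_RGT_0; rewrite minus_IZR; split; nra.
by case: hd => /lt_IZR ? /lt_IZR ?; lia.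
Qed.

Lemma V_iff_exists_Vk m h (x : pt m) : V h x <-> exists k, Vk h k x.
Proof.
split=> [hV | [k [y [[hV _] ey]]]]; last by rewrite /V (Rabs_prod_s_shift ey).
have hPI := PI_RGT_0.
pose k j := Int_part (x j / (2 * PI)).
pose y j := x j - 2 * PI * IZR (k j).
have ey j : x j = y j + 2 * PI * IZR (k j) by rewrite /y; ring.
exists k, y; split=> //; split=> [|j]; first by rewrite /V -(Rabs_prod_s_shift ey).
have := base_Int_part (x j / (2 * PI)).
have : x j = x j / (2 * PI) * (2 * PI) by field; lra.
rewrite /y /k; set r := x j / (2 * PI) => exr [hr1 hr2].
rewrite exr; split; nra.
Qed.

Unset Implicit Arguments.

Theorem lemma5 (m : nat) (h : R) :
  (1 <= m)%nat -> 0 < h -> h < 2 ^ m ->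
  (forall k k' : 'I_m -> Z, k <> k' ->
     forall x : pt m, ~ (Vk h k x /\ Vk h k' x)) /\
  (forall x : pt m, V h x <-> exists k : 'I_m -> Z, Vk h k x) /\
  @compact_Rm m (@V0 m h) /\
  @strictly_convex m (@V0 m h) /\
  (exists z : pt m, @interior_pt m (@V0 m h) z) /\
  (forall x : pt m, V0 h x <-> (V h x /\ forall j, 0 < x j < 2 * PI)).
Proof.
move=> _ hh h_lt; split; [|split; [|split; [|split; [|split]]]].
- by move=> k k' hkk' x [hk hk']; apply: hkk'; exact: Vk_disjoint hh hk hk'.
- exact: V_iff_exists_Vk.
- exact: V0_compact.
- exact: V0_strictly_convex.
- exists (fun _ => PI); apply: V0_interior => [|j|]; first lra.
  + by have := PI_RGT_0; lra.
  + by rewrite prod_s_PI Rabs_right //; apply: Rle_ge; apply: pow_le; lra.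
- move=> x; exact: V0_iff_open_cube.
Qed.
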